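(* Let $(V,\mathrm d)$ be the domain complex of a closed Hilbert complex $(W,\mathrm d)$, and let $(V_h,\mathrm d_h)$, $h>0$, be a family of domain complexes of closed Hilbert complexes $(W_h,\mathrm d_h)$, equipped with morphisms $i_h\colon V_h\to V$ that extend to bounded maps $W_h\to W$, uniformly bounded in $h$, and morphisms $\pi_h\colon V\to V_h$ (bounded in the $V$-norms) with $\pi_h^k\circ i_h^k=\mathrm{id}_{V_h^k}$. Let $c_P$ be the Poincaré constant of $V$ (i.e. $\|v\|_V\le c_P\|\mathrm d v\|$ for $v\in(\mathfrak Z^k)^\perp$ in each degree). Then there exists a constant $\gamma_h>0$, depending only on $c_P$ and the norms of $i_h$ and $\pi_h$, such that for any $(\sigma_h,u_h,p_h)\in V_h^{k-1}\times V_h^k\times\mathfrak H_h^k$ there exists $(\tau_h,v_h,q_h)\in V_h^{k-1}\times V_h^k\times\mathfrak H_h^k$ with \[B_h(\sigma_h,u_h,p_h;\tau_h,v_h,q_h)\ge\gamma_h\big(\|\sigma_h\|_{V_h}+\|u_h\|_{V_h}+\|p_h\|_h\big)\big(\|\tau_h\|_{V_h}+\|v_h\|_{V_h}+\|q_h\|_h\big).\]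
   Context: A Hilbert complex $(W,\mathrm d)$ is a sequence of Hilbert spaces $W^k$ with closed densely defined linear maps $\mathrm d^k\colon V^k\subset W^k\to V^{k+1}\subset W^{k+1}$ with $\mathrm d^k\circ\mathrm d^{k-1}=0$; it is closed if each $\mathrm d^kV^k$ is closed. Its domain complex $(V,\mathrm d)$ consists of the $V^k$ with graph inner product $\langle u,v\rangle_V=\langle u,v\rangle+\langle\mathrm du,\mathrm dv\rangle$. A morphism of domain complexes is a sequence of bounded linear maps commuting with the differentials. $\mathfrak Z^k=\ker\mathrm d^k$, $(\mathfrak Z^k)^\perp$ its orthogonal complement in $V^k$. For $W_h$: $\langle\cdot,\cdot\rangle_h$, $\|\cdot\|_h$ are the $W_h$ inner product and norm, $\mathfrak B_h^k=\mathrm d_h V_h^{k-1}$, $\mathfrak H_h^k=\ker\mathrm d_h^k\cap(\mathfrak B_h^k)^\perp$. The bilinear form is $B_h(\sigma_h,u_h,p_h;\tau_h,v_h,q_h)=\langle\sigma_h,\tau_h\rangle_h-\langle u_h,\mathrm d_h\tau_h\rangle_h+\langle\mathrm d_h\sigma_h,v_h\rangle_h+\langle\mathrm d_hu_h,\mathrm d_hv_h\rangle_h+\langle p_h,v_h\rangle_h-\langle u_h,q_h\rangle_h$. *)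

From HB Require Import structures.
From mathcomp Require Import all_boot all_order all_algebra.
From mathcomp Require Import reals.
Set Implicit Arguments. Unset Strict Implicit. Unset Printing Implicit Defensive.
Import Order.TTheory GRing.Theory Num.Theory.
Local Open Scope ring_scope.

Record hspace (R : realType) := HSpace {
  hcar : lmodType R;
  hip : hcar -> hcar -> R;
  hip_sym : forall x y, hip x y = hip y x;
  hip_linl : forall a x y z, hip (a *: x + y) z = a * hip x z + hip y z;
  hip_ge0 : forall x, 0 <= hip x x;
  hip_def : forall x, hip x x = 0 -> x = 0;
  hip_complete : forall u : nat -> hcar,
    (forall e : R, 0 < e -> exists N, forall m n, (N <= m)%N -> (N <= n)%N ->
        Num.sqrt (hip (u m - u n) (u m - u n)) < e) ->
    exists x, forall e : R, 0 < e -> exists N, forall n, (N <= n)%N ->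
        Num.sqrt (hip (u n - x) (u n - x)) < e
}.
Arguments hip {R} h _ _.

Section HS.
Variables (R : realType) (H : hspace R).
Definition hnorm (x : hcar H) : R := Num.sqrt (hip H x x).
Definition hconv (u : nat -> hcar H) (x : hcar H) : Prop :=
  forall e : R, 0 < e -> exists N, forall n, (N <= n)%N -> hnorm (u n - x) < e.
Definition hclosed (S : hcar H -> Prop) : Prop :=
  forall u x, (forall n, S (u n)) -> hconv u x -> S x.
Definition hdense (S : hcar H -> Prop) : Prop :=
  forall x (e : R), 0 < e -> exists y, S y /\ hnorm (x - y) < e.
Definition subspace (S : hcar H -> Prop) : Prop :=
  S 0 /\ forall (a : R) x y, S x -> S y -> S (a *: x + y).
End HS.

(** * Hilbert complexes, indexed by degrees k : nat.
    [W k] is the Hilbert space W^k, [dom k] the domain V^k of d^k,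
    and [d k] : W^k -> W^{k+1} represents d^k (only its values on V^k matter). *)
Unset Implicit Arguments.
Record hcomplex (R : realType) := HComplex {
  W : nat -> hspace R;
  dom : forall k, hcar (W k) -> Prop;
  d : forall k, hcar (W k) -> hcar (W k.+1);
  dom_subspace : forall k : nat, subspace (dom k);
  d_lin : forall k (a : R) x y, dom k x -> dom k y -> d k (a *: x + y) = a *: d k x + d k y;
  d_dom : forall k x, dom k x -> dom k.+1 (d k x);
  d_dd : forall k x, dom k x -> d k.+1 (d k x) = 0;
  d_dense : forall k : nat, hdense (dom k);
  d_closed_op : forall k (u : nat -> hcar (W k)) x y,
    (forall n, dom k (u n)) -> hconv u x -> hconv (fun n => d k (u n)) y ->
    dom k x /\ d k x = y
}.
Set Implicit Arguments.
Arguments W {R} h k.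
Arguments dom {R} h k _.
Arguments d {R} h {k} _.

Section Complex.
Variables (R : realType) (X : hcomplex R).
Definition closed_complex : Prop :=
  forall k, hclosed (fun y : hcar (W X k.+1) => exists x, dom X k x /\ d X x = y).
Definition vip k (x y : hcar (W X k)) : R := hip (W X k) x y + hip (W X k.+1) (d X x) (d X y).
Definition vnorm k (x : hcar (W X k)) : R := Num.sqrt (vip x x).
Definition Zk k (x : hcar (W X k)) : Prop := dom X k x /\ d X x = 0.
Definition Zperp k (x : hcar (W X k)) : Prop := dom X k x /\ forall z, Zk z -> vip x z = 0.
Definition poincare (cP : R) : Prop :=
  forall k (v : hcar (W X k)), Zperp v -> vnorm v <= cP * hnorm (d X v).
Definition Bk k (y : hcar (W X k.+1)) : Prop := exists x, dom X k x /\ d X x = y.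
Definition harmonic k (q : hcar (W X k.+1)) : Prop :=
  Zk q /\ forall b, Bk b -> hip (W X k.+1) q b = 0.
(** the bilinear form B_h, with sigma in degree k, u and p in degree k+1 *)
Definition Bform k (sigma : hcar (W X k)) (u p : hcar (W X k.+1))
  (tau : hcar (W X k)) (v q : hcar (W X k.+1)) : R :=
  hip (W X k) sigma tau - hip (W X k.+1) u (d X tau) + hip (W X k.+1) (d X sigma) v
  + hip (W X k.+2) (d X u) (d X v) + hip (W X k.+1) p v - hip (W X k.+1) u q.
End Complex.

(** A morphism of domain complexes Y -> X given by a map defined on all of W
    (i.e. together with its extension W_Y -> W_X), which is linear and bounded
    on W, maps V to V, and commutes with d on V. *)
Definition ext_morphism (R : realType) (Y X : hcomplex R)
  (f : forall k, hcar (W Y k) -> hcar (W X k)) : Prop :=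
  [/\ forall k (a : R) x y, f k (a *: x + y) = a *: f k x + f k y,
      exists C : R, forall k x, hnorm (f k x) <= C * hnorm x,
      forall k x, dom Y k x -> dom X k (f k x)
    & forall k x, dom Y k x -> f k.+1 (d Y x) = d X (f k x)].

Definition dmorphism (R : realType) (X Y : hcomplex R)
  (f : forall k, hcar (W X k) -> hcar (W Y k)) : Prop :=
  [/\ forall k (a : R) x y, dom X k x -> dom X k y -> f k (a *: x + y) = a *: f k x + f k y,
      exists C : R, forall k x, dom X k x -> vnorm (f k x) <= C * vnorm x,
      forall k x, dom X k x -> dom Y k (f k x)
    & forall k x, dom X k x -> f k.+1 (d X x) = d Y (f k x)].

(* Decompose u = uB + uH + uP (Hodge decomposition: uB = d rho with rho orthogonal to
   the cycles, uH harmonic, uP orthogonal to the cycles) and test with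
   tau = sigma - rho / t, v = u + d sigma + p, q = p - uH.  Expanding B_h gives
   |sigma|^2 - <sigma, rho>/t + |uB|^2/t + |d sigma|^2 + |du|^2 + |p|^2 + |uH|^2,
   which dominates (2t)^-1 times the squared norm of (sigma, u, p) once rho and uP
   satisfy the discrete Poincare inequality |w|_V^2 <= t |dw|^2.  That inequality holds
   with t = (1 + |c_P| |i_h| |pi_h|)^2: projecting i_h w onto the complement of the
   cycles of V, applying c_P and mapping back with pi_h yields an element with the
   same differential as w, and w has the least graph norm in its class modulo cycles.
   Since the test triple has norm at most sqrt 5 times that of (sigma, u, p), one can
   take gamma_h = (18 t)^-1. *)

From HB Require Import structures.
From mathcomp Require Import all_boot all_order all_algebra.
From mathcomp Require Import reals boolp classical_sets.
From mathcomp Require Import ring lra.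
Set Implicit Arguments. Unset Strict Implicit. Unset Printing Implicit Defensive.
Import Order.TTheory GRing.Theory Num.Theory.
Local Open Scope ring_scope.

Section InnerProduct.
Variables (R : realType) (H : hspace R).
Local Notation V := (hcar H).
Local Notation ip := (hip H).
Implicit Types (x y z : V) (a : R).

Lemma hip0l z : ip 0 z = 0.
Proof.
have := @hip_linl R H 1 0 0 z; rewrite scale1r addr0 mul1r => e.
by have := congr1 (fun t => t - ip 0 z) e; rewrite subrr addrK.
Qed.

Lemma hipDl x y z : ip (x + y) z = ip x z + ip y z.
Proof. by have := @hip_linl R H 1 x y z; rewrite scale1r mul1r. Qed.

Lemma hipZl a x z : ip (a *: x) z = a * ip x z.
Proof. by have := @hip_linl R H a x 0 z; rewrite addr0 hip0l addr0. Qed.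

Lemma hipNl x z : ip (- x) z = - ip x z.
Proof. by rewrite -scaleN1r hipZl mulN1r. Qed.

Lemma hipBl x y z : ip (x - y) z = ip x z - ip y z.
Proof. by rewrite hipDl hipNl. Qed.

Lemma hip0r z : ip z 0 = 0.
Proof. by rewrite hip_sym hip0l. Qed.

Lemma hipDr x y z : ip z (x + y) = ip z x + ip z y.
Proof. by rewrite hip_sym hipDl !(hip_sym z). Qed.

Lemma hipZr a x z : ip z (a *: x) = a * ip z x.
Proof. by rewrite hip_sym hipZl hip_sym. Qed.

Lemma hipNr x z : ip z (- x) = - ip z x.
Proof. by rewrite hip_sym hipNl hip_sym. Qed.

Lemma hipBr x y z : ip z (x - y) = ip z x - ip z y.
Proof. by rewrite hipDr hipNr. Qed.

Definition hipE := (hipDl, hipBl, hipNl, hipZl, hipDr, hipBr, hipNr, hipZr, hip0l, hip0r).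

Lemma hipNN x : ip (- x) (- x) = ip x x.
Proof. by rewrite hipNl hipNr opprK. Qed.

Lemma hip2_le x y : 2 * ip x y <= ip x x + ip y y.
Proof. by have := hip_ge0 (x - y); rewrite !hipE (hip_sym y x); lra. Qed.

Lemma hip_sqrD2_le x y : ip (x + y) (x + y) <= 2 * ip x x + 2 * ip y y.
Proof. by have := hip2_le x y; rewrite !hipE (hip_sym y x); lra. Qed.

Lemma hip_sqrD3_le x y z :
  ip (x + y + z) (x + y + z) <= 3 * (ip x x + ip y y + ip z z).
Proof.
have := hip2_le x y; have := hip2_le y z; have := hip2_le x z.
by rewrite !hipE (hip_sym y x) (hip_sym z x) (hip_sym z y); lra.
Qed.

Lemma hip_parallelogram x y :
  ip (x - y) (x - y) + ip (x + y) (x + y) = 2 * ip x x + 2 * ip y y.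
Proof. by rewrite !hipE (hip_sym y x); ring. Qed.

Lemma hip_CauchySchwarz x y : ip x y ^+ 2 <= ip x x * ip y y.
Proof.
have [y0|ny0] := eqVneq (ip y y) 0.
  by rewrite (hip_def y0) !hip0r expr0n /= mulr0.
have yy0 : 0 < ip y y by rewrite lt_neqAle eq_sym ny0 hip_ge0.
(* expand [0 <= |x - (<x,y>/<y,y>) y|^2] and multiply by [<y,y>] *)
have := mulr_ge0 (hip_ge0 (x - (ip x y / ip y y) *: y)) (ltW yy0).
rewrite !hipE (hip_sym y x).
have : ip y y != 0 by [].
move: (ip x y) (ip y y) (ip x x) => c b a b0.
suff -> : (a - c / b * c - c / b * (c - c / b * b)) * b = a * b - c ^+ 2 by lra.
by field.
Qed.

Lemma hnorm_ge0 x : 0 <= hnorm x.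
Proof. exact: sqrtr_ge0. Qed.

Lemma hnorm_sqr x : hnorm x ^+ 2 = ip x x.
Proof. by rewrite sqr_sqrtr // hip_ge0. Qed.

Lemma hnorm_eq0 x : hnorm x = 0 -> x = 0.
Proof. by move=> /eqP; rewrite sqrtr_eq0 => h; apply: hip_def; apply/eqP; rewrite eq_le h hip_ge0. Qed.

Lemma hnormD x y : hnorm (x + y) <= hnorm x + hnorm y.
Proof.
have nx := hnorm_ge0 x; have ny := hnorm_ge0 y; have nxny := mulr_ge0 nx ny.
have cs := hip_CauchySchwarz x y; rewrite -!hnorm_sqr in cs.
have {}cs : ip x y <= hnorm x * hnorm y by nra.
have : hnorm (x + y) ^+ 2 <= (hnorm x + hnorm y) ^+ 2.
  by rewrite hnorm_sqr !hipE (hip_sym y x) sqrrD -!hnorm_sqr; lra.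
nra.
Qed.
Lemma hnorm_lt x e : 0 < e -> ip x x < e ^+ 2 -> hnorm x < e.
Proof. by move=> e0; rewrite -hnorm_sqr; have := hnorm_ge0 x; nra. Qed.
End InnerProduct.

Section Projection.
Variables (R : realType) (H : hspace R) (S : hcar H -> Prop).
Hypotheses (S_subspace : subspace S) (S_closed : hclosed S).
Local Notation ip := (hip H).

Lemma subspaceZ a y : S y -> S (a *: y).
Proof. by case: S_subspace => S0 SL Sy; have := SL a y 0 Sy S0; rewrite addr0. Qed.

Lemma subspaceD y z : S y -> S z -> S (y + z).
Proof. by case: S_subspace => _ SL Sy Sz; have := SL 1 y z Sy Sz; rewrite scale1r. Qed.

Lemma subspace_min_orth x s : S s ->
    (forall t, S t -> ip (x - s) (x - s) <= ip (x - t) (x - t)) ->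
  forall t, S t -> ip (x - s) t = 0.
Proof.
move=> Ss s_min t St; set a := ip (x - s) t; set T := ip t t.
have T0 : 0 <= T := hip_ge0 t.
have var l : 2 * l * a <= l ^+ 2 * T.
  have := s_min _ (subspaceD Ss (subspaceZ l St)).
  rewrite opprD addrA /a; move: (x - s) => y.
  by rewrite !(hipBl, hipBr, hipZl, hipZr) (hip_sym t y) -/T expr2 !mulrA; lra.
(* test the variational inequality with [l = a / (T + 1)], i.e. [a = l (T + 1)] *)
pose l := a / (T + 1).
have aE : a = l * (T + 1) by rewrite /l mulfVK // lt0r_neq0 //; lra.
have l0 : l = 0 by have := var l; rewrite [X in 2 * l * X]aE; nra.
by rewrite aE l0 mul0r.
Qed.

Lemma subspace_min_dist x :
  exists2 s, S s & forall t, S t -> ip (x - s) (x - s) <= ip (x - t) (x - t).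
Proof.
pose E : set R := fun r => exists2 s, S s & r = ip (x - s) (x - s).
have E_inf : has_inf E.
  split; first by exists (ip (x - 0) (x - 0)); exists 0 => //; case: S_subspace.
  by exists 0 => _ [s _ ->]; exact: hip_ge0.
set delta := inf E.
have delta_le s : S s -> delta <= ip (x - s) (x - s).
  by move=> Ss; apply: (ge_inf E_inf.2); exists s.
have delta0 : 0 <= delta.
  apply: lb_le_inf; first exact: E_inf.1.
  by move=> _ [s _ ->]; exact: hip_ge0.
have /choice[sn snP] n : exists s, S s /\ ip (x - s) (x - s) < delta + n.+1%:R^-1.
  have n0 : 0 < n.+1%:R^-1 :> R by rewrite invr_gt0 ltr0Sn.
  by have [_ [s Ss ->] lt] := inf_adherent n0 E_inf; exists s.
have invS_le (N n : nat) : (N <= n)%N -> n.+1%:R^-1 <= N.+1%:R^-1 :> R.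
  by move=> Nn; rewrite lef_pV2 ?posrE ?ltr0Sn // ler_nat ltnS.
have sn_cauchy m n : ip (sn n - sn m) (sn n - sn m) <= 2 * n.+1%:R^-1 + 2 * m.+1%:R^-1.
  have [Sm ltm] := snP m; have [Sn ltn] := snP n.
  have := hip_parallelogram (x - sn m) (x - sn n).
  have -> : x - sn m - (x - sn n) = sn n - sn m by rewrite opprB addrC addrA subrK.
  have -> : x - sn m + (x - sn n) = 2%:R *: (x - 2^-1 *: (sn m + sn n)).
    by rewrite scalerBr scalerA divff ?pnatr_eq0 // scale1r scaler_nat mulr2n opprD addrACA.
  rewrite !hipZl !hipZr.
  have := delta_le _ (subspaceZ 2^-1 (subspaceD Sm Sn)).
  (* [lra] does not treat [n.+1%:R^-1] as an atom, hence the generalizations *)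
  move: ltm ltn; move: (m.+1%:R^-1) (n.+1%:R^-1) => em en; lra.
have [s sn_s] : exists s, hconv sn s.
  apply: hip_complete => e e0.
  have [N ltN] := ltr_add_invr (divr_gt0 (exprn_gt0 2 e0) (ltr0Sn R 3)).
  exists N => m n Nm Nn; apply: hnorm_lt => //.
  move: (sn_cauchy n m) (invS_le _ _ Nm) (invS_le _ _ Nn) ltN.
  by move: (N.+1%:R^-1) (m.+1%:R^-1) (n.+1%:R^-1) => eN em en; lra.
have Ss : S s by apply: (S_closed _ sn_s) => n; exact: (snP n).1.
exists s => // t St; apply: le_trans (delta_le _ St).
suff : hnorm (x - s) <= Num.sqrt delta.
  by move=> le_sqrt; rewrite -hnorm_sqr -(sqr_sqrtr delta0) ler_sqr ?nnegrE ?hnorm_ge0 ?sqrtr_ge0.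
apply/ler_addgt0Pr => e e0.
have e20 : 0 < e / 2 by rewrite divr_gt0.
have [N1 ltN1] := ltr_add_invr (exprn_gt0 2 e20).
have [N2 leN2] := sn_s _ e20.
pose n := maxn N1 N2.
have close_n : hnorm (sn n - s) < e / 2 := leN2 n (leq_maxr _ _).
have near_min : hnorm (x - sn n) < Num.sqrt delta + e / 2.
  apply: hnorm_lt; first by rewrite ltr_pwDr ?sqrtr_ge0.
  move: (snP n).2 (invS_le _ _ (leq_maxl N1 N2)) ltN1.
  rewrite sqrrD sqr_sqrtr //; have := mulr_ge0 (sqrtr_ge0 delta) (ltW e20).
  by move: (N1.+1%:R^-1) (n.+1%:R^-1) => eN en; lra.
have := hnormD (x - sn n) (sn n - s); rewrite addrA subrK; lra.
Qed.

Lemma hprojection x : exists2 s, S s & forall t, S t -> ip (x - s) t = 0.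
Proof. by have [s Ss s_min] := subspace_min_dist x; exists s; last exact: subspace_min_orth. Qed.
End Projection.

Section HilbertComplex.
Variables (R : realType) (X : hcomplex R).
Local Notation ip k := (hip (W X k)).
Local Notation orthZ k x := (forall z, Zk z -> ip k x z = 0).

Lemma dom0 k : dom X k 0.
Proof. by case: (dom_subspace R X k). Qed.

Lemma domD k x y : dom X k x -> dom X k y -> dom X k (x + y).
Proof. exact: (subspaceD (dom_subspace R X k)). Qed.

Lemma domZ k a x : dom X k x -> dom X k (a *: x).
Proof. exact: (subspaceZ (dom_subspace R X k)). Qed.

Lemma domB k x y : dom X k x -> dom X k y -> dom X k (x - y).
Proof. by move=> Dx Dy; rewrite -scaleN1r; apply: domD => //; exact: domZ. Qed.

Lemma d0 k : d X (0 : hcar (W X k)) = 0.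
Proof.
have := d_lin R X k 1 0 0 (dom0 k) (dom0 k); rewrite scale1r addr0 scale1r => e.
by have := congr1 (fun t => t - d X (0 : hcar (W X k))) e; rewrite subrr addrK.
Qed.

Lemma dD k (x y : hcar (W X k)) : dom X k x -> dom X k y -> d X (x + y) = d X x + d X y.
Proof. by move=> Dx Dy; have := d_lin R X k 1 x y Dx Dy; rewrite !scale1r. Qed.

Lemma dZ k a (x : hcar (W X k)) : dom X k x -> d X (a *: x) = a *: d X x.
Proof. by move=> Dx; have := d_lin R X k a x 0 Dx (dom0 k); rewrite !addr0 d0 addr0. Qed.

Lemma dB k (x y : hcar (W X k)) : dom X k x -> dom X k y -> d X (x - y) = d X x - d X y.
Proof.
by move=> Dx Dy; rewrite -!scaleN1r dD ?dZ //; exact: domZ.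
Qed.

Lemma Zk_subspace k : subspace (@Zk R X k).
Proof.
split; first by split; [exact: dom0 | exact: d0].
move=> a x y [Dx dx0] [Dy dy0]; split; first by apply: domD => //; exact: domZ.
by rewrite (d_lin R X) // dx0 dy0 scaler0 addr0.
Qed.

Lemma Zk_closed k : hclosed (@Zk R X k).
Proof.
move=> u x Zu ux; have du0 : hconv (fun n => d X (u n)) 0.
  by move=> e e0; exists 0%N => n _; rewrite (Zu n).2 subrr /hnorm hip0l sqrtr0.
by have [Dx dx0] := d_closed_op R X k u x 0 (fun n => (Zu n).1) ux du0.
Qed.

Lemma ZkB k (x y : hcar (W X k)) : Zk x -> Zk y -> Zk (x - y).
Proof. by move=> [Dx dx0] [Dy dy0]; split; [exact: domB | rewrite dB // dx0 dy0 subr0]. Qed.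

Lemma Bk_subspace k : subspace (@Bk R X k).
Proof.
split; first by exists 0; split; [exact: dom0 | exact: d0].
move=> a _ _ [x [Dx <-]] [y [Dy <-]]; exists (a *: x + y).
by split; [apply: domD => //; exact: domZ | exact: d_lin].
Qed.

Lemma Bk_Zk k (b : hcar (W X k.+1)) : Bk b -> Zk b.
Proof. by move=> [x [Dx <-]]; split; [exact: d_dom | exact: d_dd]. Qed.

Lemma Zk_orth_decomp k (x : hcar (W X k)) : dom X k x ->
  exists2 z, Zk z & [/\ dom X k (x - z), d X (x - z) = d X x & orthZ k (x - z)].
Proof.
move=> Dx; have [z [Dz dz0] xz_orth] := hprojection (@Zk_subspace k) (@Zk_closed k) x.
by exists z => //; split => //; [exact: domB | rewrite dB // dz0 subr0].
Qed.

Lemma Bk_orth_preimage k (b : hcar (W X k.+1)) : Bk b ->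
  exists rho, [/\ dom X k rho, d X rho = b & orthZ k rho].
Proof.
move=> [x [Dx <-]]; have [z _ [Drho drho rho_orth]] := Zk_orth_decomp Dx.
by exists (x - z).
Qed.

Lemma hodge_decomposition k (u : hcar (W X k.+1)) :
  closed_complex X -> dom X k.+1 u ->
  exists uB uH uP, [/\ u = uB + uH + uP, Bk uB, harmonic uH
                     & [/\ dom X k.+1 uP, d X uP = d X u & orthZ k.+1 uP]].
Proof.
move=> closedX Du; have [uZ ZuZ [DuP duP uP_orth]] := Zk_orth_decomp Du.
have [uB BuB uH_orth] := hprojection (@Bk_subspace k) (closedX k) uZ.
exists uB, (uZ - uB), (u - uZ); split => //.
- by rewrite [uB + _]addrC subrK addrC subrK.
- by split => //; apply: ZkB => //; exact: Bk_Zk.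
Qed.

Lemma vip_ge0 k (x : hcar (W X k)) : 0 <= vip x x.
Proof. by rewrite /vip addr_ge0 // hip_ge0. Qed.

Lemma vnorm_sqr k (x : hcar (W X k)) : vnorm x ^+ 2 = vip x x.
Proof. by rewrite /vnorm sqr_sqrtr // vip_ge0. Qed.

Lemma vnorm_ge0 k (x : hcar (W X k)) : 0 <= vnorm x.
Proof. exact: sqrtr_ge0. Qed.

Lemma vnorm_eq0 k (x : hcar (W X k)) : vnorm x = 0 -> x = 0.
Proof.
move=> /eqP; rewrite sqrtr_eq0 /vip => le0; apply: hip_def; apply/eqP.
by rewrite eq_le hip_ge0 andbT; have := hip_ge0 (d X x); lra.
Qed.

Lemma Bform0r k (s : hcar (W X k)) (u p : hcar (W X k.+1)) : Bform s u p 0 0 0 = 0.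
Proof. by rewrite /Bform !d0 !hip0r !(subr0, addr0). Qed.

Lemma Bform_gt0_norm_gt0 k (s tau : hcar (W X k)) (u p v q : hcar (W X k.+1)) :
  0 < Bform s u p tau v q -> 0 < vnorm tau + vnorm v + hnorm q.
Proof.
move=> B_gt0; have := vnorm_ge0 tau; have := vnorm_ge0 v; have := hnorm_ge0 q.
move=> q0 v0 tau0; rewrite lt_neqAle !addr_ge0 // andbT; apply/negP => /eqP sum0.
have tau_0 : tau = 0 by apply: vnorm_eq0; lra.
have v_0 : v = 0 by apply: vnorm_eq0; lra.
have q_0 : q = 0 by apply: hnorm_eq0; lra.
by move: B_gt0; rewrite tau_0 v_0 q_0 Bform0r ltxx.
Qed.

Lemma vip_le_orthZ k (v w : hcar (W X k)) : dom X k v -> dom X k w ->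
  d X (v - w) = 0 -> orthZ k v -> vip v v <= vip w w.
Proof.
move=> Dv Dw dvw0 v_orth.
have vw : ip k v v = ip k v w.
  by apply/eqP; rewrite -subr_eq0 -hipBr v_orth //; split; [exact: domB|].
have dw : d X w = d X v by apply/eqP; rewrite eq_sym -subr_eq0 -dB // dvw0.
by rewrite /vip dw; have := hip2_le v w; lra.
Qed.
End HilbertComplex.

Lemma ler_normMl (R : realDomainType) (a b c : R) : 0 <= b -> a <= c * b -> a <= `|c| * b.
Proof. by move=> b0 /le_trans; apply; apply: ler_wpM2r => //; exact: ler_norm. Qed.

Section DiscretePoincare.
Variables (R : realType) (X Y : hcomplex R).
Variables (i : forall k, hcar (W Y k) -> hcar (W X k)).
Variables (p : forall k, hcar (W X k) -> hcar (W Y k)).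
Variables (cP Ci Cpi : R).
Hypotheses (i_morph : ext_morphism i) (p_morph : dmorphism p).
Hypothesis p_i : forall k x, dom Y k x -> p (i x) = x.
Hypothesis poincareX : poincare X cP.
Hypothesis i_bound : forall k (x : hcar (W Y k)), hnorm (i x) <= Ci * hnorm x.
Hypothesis p_bound : forall k x, dom X k x -> vnorm (p x) <= Cpi * vnorm x.

Lemma discrete_poincare k (v : hcar (W Y k)) :
  dom Y k v -> (forall z, Zk z -> hip (W Y k) v z = 0) ->
  vnorm v <= `|Cpi| * `|cP| * `|Ci| * hnorm (d Y v).
Proof.
move: i_morph p_morph => [_ _ i_dom i_d] [_ _ p_dom p_d] Dv v_orth.
have [z [_ dz0] [Dx dx x_orth]] := Zk_orth_decomp (i_dom _ _ Dv).
set x := i v - z in Dx dx x_orth.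
have x_perp : Zperp x.
  by split=> // w Zw; rewrite /vip x_orth // Zw.2 hip0r addr0.
have dx_i : d X x = i (d Y v) by rewrite dx i_d.
have Dpx : dom Y k (p x) := p_dom k x Dx.
have dpx : d Y (p x) = d Y v by rewrite -p_d // dx_i p_i //; exact: d_dom.
have v_min : vnorm v <= vnorm (p x).
  rewrite /vnorm ler_sqrt ?vip_ge0 //; apply: vip_le_orthZ => //.
  by rewrite dB // dpx subrr.
have px_le : vnorm (p x) <= `|Cpi| * vnorm x.
  exact: ler_normMl (vnorm_ge0 _) (p_bound Dx).
have x_le : vnorm x <= `|cP| * hnorm (d X x).
  exact: ler_normMl (hnorm_ge0 _) (poincareX x_perp).
have dx_le : hnorm (d X x) <= `|Ci| * hnorm (d Y v).
  by rewrite dx_i; exact: ler_normMl (hnorm_ge0 _) (i_bound _).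
apply: (le_trans v_min); apply: (le_trans px_le); rewrite -!mulrA ler_wpM2l //.
by apply: (le_trans x_le); rewrite ler_wpM2l.
Qed.
End DiscretePoincare.

Lemma mul_sum3_le (R : realFieldType) (a b c x y z : R) :
  (a + b + c) * (x + y + z) <= 3 / 2 * (a ^+ 2 + b ^+ 2 + c ^+ 2 + (x ^+ 2 + y ^+ 2 + z ^+ 2)).
Proof.
have := sqr_ge0 (a + b + c - (x + y + z)).
have := sqr_ge0 (a - b); have := sqr_ge0 (b - c); have := sqr_ge0 (a - c).
have := sqr_ge0 (x - y); have := sqr_ge0 (y - z); have := sqr_ge0 (x - z).
rewrite !sqrrB !sqrrD; lra.
Qed.

Section InfSup.
Variables (R : realType) (Y : hcomplex R) (t : R).
Hypothesis t_ge1 : 1 <= t.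
Local Notation ip k := (hip (W Y k)).
Local Notation orthZ k x := (forall z, Zk z -> ip k x z = 0).
Hypothesis poincareY : forall k (v : hcar (W Y k)),
  dom Y k v -> orthZ k v -> vip v v <= t * ip k.+1 (d Y v) (d Y v).

Section TestFunctions.
Variable c : R.
Hypothesis ct : c * t = 1.
Variables (k : nat) (sigma rho : hcar (W Y k)) (u p uB uH uP : hcar (W Y k.+1)).
Hypotheses (Dsigma : dom Y k sigma) (Du : dom Y k.+1 u) (p_harm : harmonic p).
Hypothesis u_decomp : u = uB + uH + uP.
Hypotheses (Drho : dom Y k rho) (drho : d Y rho = uB) (rho_orth : orthZ k rho).
Hypothesis uH_harm : harmonic uH.
Hypotheses (DuP : dom Y k.+1 uP) (duP : d Y uP = d Y u) (uP_orth : orthZ k.+1 uP).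

Local Notation tau := (sigma - c *: rho).
Local Notation v := (u + d Y sigma + p).
Local Notation q := (p - uH).
Local Notation S := (vip sigma sigma + vip u u + ip k.+1 p p).

Let Bk_uB : Bk uB.
Proof. by exists rho. Qed.

Let Zk_uB : Zk uB.
Proof. exact: Bk_Zk Bk_uB. Qed.

Let vip_u : vip u u = ip _ uB uB + ip _ uH uH + ip _ uP uP + ip _ (d Y u) (d Y u).
Proof.
have oHB : ip _ uH uB = 0 := uH_harm.2 _ Bk_uB.
have oPB : ip _ uP uB = 0 := uP_orth Zk_uB.
have oPH : ip _ uP uH = 0 := uP_orth uH_harm.1.
rewrite /vip {1 2}u_decomp !(hipDl, hipDr) (hip_sym uB) (hip_sym uB uP) (hip_sym uH uP).
by rewrite oHB oPB oPH; lra.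
Qed.

Let d_tau : d Y tau = d Y sigma - c *: uB.
Proof. by rewrite dB ?dZ ?drho //; exact: domZ. Qed.

Let d_v : d Y v = d Y u.
Proof.
have Ddsigma := d_dom _ _ _ _ Dsigma; have [[Dp dp0] _] := p_harm.
by rewrite !dD ?d_dd ?dp0 ?addr0 //; exact: domD.
Qed.

Lemma Bform_test : Bform sigma u p tau v q =
  ip k sigma sigma - c * ip k sigma rho + c * ip _ uB uB + ip _ (d Y sigma) (d Y sigma)
  + ip _ (d Y u) (d Y u) + ip _ p p + ip _ uH uH.
Proof.
have [[Dp dp0] p_orth] := p_harm.
have o_p_dsigma : ip _ p (d Y sigma) = 0 by apply: p_orth; exists sigma.
have u_uB : ip _ u uB = ip _ uB uB.
  by rewrite u_decomp !hipDl (uP_orth Zk_uB) (uH_harm.2 _ Bk_uB) !addr0.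
have u_uH : ip _ u uH = ip _ uH uH.
  by rewrite u_decomp !hipDl (uP_orth uH_harm.1) (hip_sym uB) (uH_harm.2 _ Bk_uB) add0r addr0.
rewrite /Bform d_tau d_v !(hipDl, hipBl, hipZl, hipDr, hipBr, hipNr, hipZr).
rewrite u_uB u_uH o_p_dsigma (hip_sym (d Y sigma) p) o_p_dsigma.
by rewrite (hip_sym (d Y sigma) u) (hip_sym p u); lra.
Qed.

Let c_gt0 : 0 < c.
Proof. by rewrite -(pmulr_lgt0 _ (lt_le_trans ltr01 t_ge1)) ct ltr01. Qed.

Let c_le1 : c <= 1.
Proof. by rewrite -ct ler_peMr ?(ltW c_gt0). Qed.

Let rho_poincare : c ^+ 2 * (ip k rho rho + ip _ uB uB) <= c * ip _ uB uB.
Proof.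
have := ler_wpM2l (sqr_ge0 c) (poincareY Drho rho_orth); rewrite /vip drho.
have -> : c ^+ 2 * (t * ip _ uB uB) = c * (c * t) * ip _ uB uB by ring.
by rewrite ct mulr1.
Qed.

Let uP_poincare : c * (ip _ uP uP + ip _ (d Y u) (d Y u)) <= ip _ (d Y u) (d Y u).
Proof.
have := ler_wpM2l (ltW c_gt0) (poincareY DuP uP_orth).
by rewrite /vip duP mulrA ct mul1r.
Qed.

Lemma Bform_test_ge : c * S <= 2 * Bform sigma u p tau v q.
Proof.
have young : 2 * (c * ip k sigma rho) <= ip k sigma sigma + c ^+ 2 * ip k rho rho.
  by have := hip2_le sigma (c *: rho); rewrite hipZl !hipZr expr2 !mulrA; lra.
have c_le m x : c * ip m x x <= ip m x x by rewrite ler_piMl ?hip_ge0.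
have := c_le _ sigma; have := c_le _ (d Y sigma); have := c_le _ uH; have := c_le _ p.
have := mulr_ge0 (sqr_ge0 c) (hip_ge0 uB); have := rho_poincare; have := uP_poincare.
have := hip_ge0 (d Y u); have := hip_ge0 (d Y sigma); have := hip_ge0 p; have := hip_ge0 uH.
rewrite Bform_test vip_u /vip; lra.
Qed.

Lemma test_vip_le : vip tau tau + vip v v + ip k.+1 q q <= 5 * S.
Proof.
have tau_le : vip tau tau <= 2 * ip k sigma sigma + 2 * ip _ (d Y sigma) (d Y sigma)
                            + 2 * (c ^+ 2 * (ip k rho rho + ip _ uB uB)).
  rewrite /vip d_tau; have := hip_sqrD2_le sigma (- (c *: rho)).
  have := hip_sqrD2_le (d Y sigma) (- (c *: uB)); rewrite !hipNN !hipZl !hipZr expr2; lra.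
have v_le : vip v v <= 3 * (ip _ u u + ip _ (d Y sigma) (d Y sigma) + ip _ p p)
                       + ip _ (d Y u) (d Y u).
  by rewrite /vip d_v lerD2r; exact: hip_sqrD3_le.
have q_le : ip _ q q <= 2 * ip _ p p + 2 * ip _ uH uH.
  by have := hip_sqrD2_le p (- uH); rewrite hipNN.
have cuB : c * ip _ uB uB <= ip _ uB uB by rewrite ler_piMl ?hip_ge0.
have := hip_ge0 uP; have := hip_ge0 sigma; have := hip_ge0 (d Y u).
have := rho_poincare; have := vip_u; move: tau_le v_le; rewrite /vip; lra.
Qed.
End TestFunctions.

Hypothesis closedY : closed_complex Y.

Lemma Bform_inf_sup k (sigma : hcar (W Y k)) (u p : hcar (W Y k.+1)) :
  dom Y k sigma -> dom Y k.+1 u -> harmonic p ->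
  exists (tau : hcar (W Y k)) (v q : hcar (W Y k.+1)),
    [/\ dom Y k tau, dom Y k.+1 v, harmonic q,
        0 < vnorm sigma + vnorm u + hnorm p -> 0 < vnorm tau + vnorm v + hnorm q
      & (18 * t)^-1 * (vnorm sigma + vnorm u + hnorm p) * (vnorm tau + vnorm v + hnorm q)
          <= Bform sigma u p tau v q].
Proof.
move=> Dsigma Du p_harm.
have [uB [uH [uP [u_decomp BuB uH_harm [DuP duP uP_orth]]]]] := hodge_decomposition closedY Du.
have [rho [Drho drho rho_orth]] := Bk_orth_preimage BuB.
have t0 : 0 < t by apply: lt_le_trans t_ge1.
have [c ct ->] : exists2 c, c * t = 1 & (18 * t)^-1 = 18^-1 * c.
  by exists t^-1; rewrite ?invfM // mulVf // lt0r_neq0.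
have c0 : 0 < c by rewrite -(pmulr_lgt0 _ t0) ct ltr01.
have B_ge := Bform_test_ge ct Dsigma Du p_harm u_decomp Drho drho rho_orth
  uH_harm DuP duP uP_orth.
have out_le := test_vip_le ct Dsigma Du p_harm u_decomp Drho drho rho_orth
  uH_harm uP_orth.
exists (sigma - c *: rho), (u + d Y sigma + p), (p - uH).
move: B_ge out_le; set tau := sigma - _; set v := u + d Y sigma + p; set q := p - uH.
rewrite -!vnorm_sqr -!hnorm_sqr => B_ge out_le.
have Dtau : dom Y k tau by rewrite /tau; apply: domB => //; exact: domZ.
have Dv : dom Y k.+1 v.
  by rewrite /v; apply: domD; [apply: domD => //; exact: d_dom | exact: p_harm.1.1].
have q_harm : harmonic q.
  split; first exact: ZkB p_harm.1 uH_harm.1.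
  by move=> b Bb; rewrite hipBl p_harm.2 // uH_harm.2 // subr0.
split => // [in_pos|].
  have S_pos : 0 < vnorm sigma ^+ 2 + vnorm u ^+ 2 + hnorm p ^+ 2.
    have := mul_sum3_le (vnorm sigma) (vnorm u) (hnorm p) (vnorm sigma) (vnorm u) (hnorm p).
    by have := mulr_gt0 in_pos in_pos; lra.
  by apply: Bform_gt0_norm_gt0; have := mulr_gt0 c0 S_pos; lra.
have prod_le : (vnorm sigma + vnorm u + hnorm p) * (vnorm tau + vnorm v + hnorm q)
                <= 9 * (vnorm sigma ^+ 2 + vnorm u ^+ 2 + hnorm p ^+ 2).
  by have := mul_sum3_le (vnorm sigma) (vnorm u) (hnorm p) (vnorm tau) (vnorm v) (hnorm q); lra.
by have := ler_wpM2l (ltW c0) prod_le; lra.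
Qed.
End InfSup.

Definition inf_sup_const (R : realType) (cP Ci Cpi : R) : R :=
  (18 * (1 + `|Cpi| * `|cP| * `|Ci|) ^+ 2)^-1.

Theorem mainTheorem8 (R : realType) :
  exists Gamma : R -> R -> R -> R,
  forall (X : hcomplex R) (Y : R -> hcomplex R)
    (ih : forall h k, hcar (W (Y h) k) -> hcar (W X k))
    (pih : forall h k, hcar (W X k) -> hcar (W (Y h) k)),
    closed_complex X ->
    (forall h, 0 < h -> closed_complex (Y h)) ->
    (forall h, 0 < h -> ext_morphism (ih h)) ->
    (exists C : R, forall h, 0 < h -> forall k x, hnorm (ih h k x) <= C * hnorm x) ->
    (forall h, 0 < h -> dmorphism (pih h)) ->
    (forall h, 0 < h -> forall k x, dom (Y h) k x -> pih h k (ih h k x) = x) ->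
    forall cP : R, poincare X cP ->
    forall h : R, 0 < h ->
    forall Ci Cpi : R,
      (forall k x, hnorm (ih h k x) <= Ci * hnorm x) ->
      (forall k x, dom X k x -> vnorm (pih h k x) <= Cpi * vnorm x) ->
      0 < Gamma cP Ci Cpi /\
      forall (k : nat) (sigma : hcar (W (Y h) k)) (u p : hcar (W (Y h) k.+1)),
        dom (Y h) k sigma -> dom (Y h) k.+1 u -> harmonic p ->
        exists (tau : hcar (W (Y h) k)) (v q : hcar (W (Y h) k.+1)),
          [/\ dom (Y h) k tau, dom (Y h) k.+1 v, harmonic q,
              0 < vnorm sigma + vnorm u + hnorm p -> 0 < vnorm tau + vnorm v + hnorm q
            & Bform sigma u p tau v q >=
                Gamma cP Ci Cpi * (vnorm sigma + vnorm u + hnorm p)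
                                * (vnorm tau + vnorm v + hnorm q)].
Proof.
exists (@inf_sup_const R).
move=> X Y ih pih _ closedY ih_morph _ pih_morph pih_ih cP poincareX h h0 Ci Cpi ih_bound pih_bound.
rewrite /inf_sup_const; set C := `|Cpi| * `|cP| * `|Ci|.
have C0 : 0 <= C by rewrite !mulr_ge0.
have t_ge1 : 1 <= (1 + C) ^+ 2 by nra.
have poincareY k (v : hcar (W (Y h) k)) : dom (Y h) k v ->
    (forall z, Zk z -> hip (W (Y h) k) v z = 0) ->
    vip v v <= (1 + C) ^+ 2 * hip (W (Y h) k.+1) (d (Y h) v) (d (Y h) v).
  move=> Dv v_orth; have := discrete_poincare (ih_morph h h0) (pih_morph h h0) (pih_ih h h0)
    poincareX ih_bound pih_bound Dv v_orth; rewrite -/C => le_C.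
  have le_C1 : vnorm v <= (1 + C) * hnorm (d (Y h) v).
    by apply: le_trans le_C _; rewrite ler_wpM2r ?hnorm_ge0 ?lerDr.
  rewrite -vnorm_sqr -hnorm_sqr -exprMn ler_sqr // nnegrE ?vnorm_ge0 //.
  by rewrite mulr_ge0 ?hnorm_ge0 ?addr_ge0.
split; first by rewrite invr_gt0 mulr_gt0 // (lt_le_trans ltr01 t_ge1).
move=> k sigma u p Dsigma Du p_harm.
exact: Bform_inf_sup t_ge1 poincareY (closedY h h0) k sigma u p Dsigma Du p_harm.
Qed.
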